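(* The algorithm SCHEMATIC-ALGO$(G,\mu^*,m^*,\Delta^*,\gamma)$ (described in the context) runs for at most $O(\beta^2\cdot\mu(G))$ rounds.
   Context: Let $G=(V,E)$ be a graph with $n$ vertices, $m$ edges, average degree $d$; $\mu(G)$ is its maximum matching size. Fix a small constant $\epsilon\in(0,1)$ and $\beta:=1/\Theta(\epsilon^3)$. For $H\subseteq E$ and a pair $e=(u,v)$, $\deg_e(H):=\deg_u(H)+\deg_v(H)$. An edge $e$ is underfull w.r.t. $H$ if $\deg_e(H)<(1-\epsilon)\beta$ and overfull w.r.t. $H$ if $\deg_e(H)>\beta$. The parameters satisfy $\mu(G)/(2+\epsilon)\le\mu^*\le n$, $d\le\Delta^*\le n$, $m^*\ge m$, $0<\gamma<1$. SCHEMATIC-ALGO: set $H\leftarrow\emptyset$. Repeat rounds: in each round set Status $\leftarrow$ false; for $i=1,\dots,(100m^*\log n)/(\mu^*(\Delta^* )^\gamma)$, sample an edge $e\in E$ uniformly at random (independently, with repetition); if $e\in E\setminus H$ and $e$ is underfull w.r.t. $H$, then set Status $\leftarrow$ true, $H\leftarrow H\cup\{e\}$, and then while some edge of $H$ is overfull w.r.t. $H$, remove such an edge from $H$. If at the end of a round Status is false, stop the rounds (this is the last round). Then let $U$ be the set of edges of $E\setminus H$ underfull w.r.t. $H$, take any $V_{small}\subseteq V$ with $\{v:\deg_v(U)\le (1-\epsilon)(\Delta^* )^\gamma/\epsilon\}\subseteq V_{small}\subseteq\{v:\deg_v(U)\le(1+\epsilon)(\Delta^* )^\gamma/\epsilon\}$,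 let $E_{small}:=\{(u,v)\in H\cup U: u,v\in V_{small}\}$, and return $\mu(E_{small})$. *)

From HB Require Import structures.
From mathcomp Require Import all_boot all_order all_algebra.
From mathcomp Require Import reals exp.
Set Implicit Arguments. Unset Strict Implicit. Unset Printing Implicit Defensive.
Import Order.TTheory GRing.Theory Num.Theory.
Local Open Scope ring_scope.

Section Defs.
Variable T : finType.

(* A simple graph on vertex set T is given by its edge set E: every edge is a
   2-element subset of T. Subgraphs H are subsets of E. *)
Definition simple_graph (E : {set {set T}}) : Prop :=
  forall e, e \in E -> #|e| = 2%N.

Definition degv (H : {set {set T}}) (v : T) : nat := #|[set f in H | v \in f]|.
Definition dege (H : {set {set T}}) (e : {set T}) : nat := (\sum_(v in e) degv H v)%N.

Definition is_matching (E M : {set {set T}}) : bool :=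
  (M \subset E) && [forall e in M, forall f in M, (e != f) ==> [disjoint e & f]].
Definition mu (E : {set {set T}}) : nat :=
  (\max_(M : {set {set T}} | is_matching E M) #|M|)%N.

Variable R : realType.

Definition underfull (eps beta : R) (H : {set {set T}}) (e : {set T}) : Prop :=
  (dege H e)%:R < (1 - eps) * beta.
Definition overfull (beta : R) (H : {set {set T}}) (e : {set T}) : Prop :=
  beta < (dege H e)%:R.

Definition remove_step (beta : R) (H H' : {set {set T}}) : Prop :=
  exists2 f, f \in H & overfull beta H f /\ H' = H :\ f.

(* "while some edge of H is overfull w.r.t. H, remove such an edge":
   any sequence of such removals that ends with no overfull edge in H. *)
Inductive cleanup (beta : R) : {set {set T}} -> {set {set T}} -> Prop :=
| cleanup_done (H : {set {set T}}) : (forall f : {set T}, f \in H -> ~ overfull beta H f) -> cleanup beta H H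
| cleanup_step (H H1 H2 : {set {set T}}) : remove_step beta H H1 -> cleanup beta H1 H2 -> cleanup beta H H2.

(* processing one sampled edge e: new subgraph and whether Status was set *)
Definition sample_step (E : {set {set T}}) (eps beta : R)
    (H : {set {set T}}) (e : {set T}) (H' : {set {set T}}) (st : bool) : Prop :=
  ((e \in E :\: H) /\ underfull eps beta H e /\ st = true /\ cleanup beta (e |: H) H')
  \/ (~ ((e \in E :\: H) /\ underfull eps beta H e) /\ st = false /\ H' = H).

(* one round consisting of k sampled edges (each sample an arbitrary edge of E,
   i.e. any possible outcome of the uniform sampling); the returned bool is the
   final value of Status in the round. *)
Inductive round (E : {set {set T}}) (eps beta : R) :
    nat -> {set {set T}} -> {set {set T}} -> bool -> Prop :=
| round0 (H : {set {set T}}) : round E eps beta 0 H H false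
| roundS (k : nat) (H H1 H2 : {set {set T}}) (e : {set T}) (b1 b2 : bool) :
    e \in E -> sample_step E eps beta H e H1 b1 ->
    round E eps beta k H1 H2 b2 -> round E eps beta k.+1 H H2 (b1 || b2).

Definition iters (n : nat) (mstar mustar Deltastar gamma : R) : nat :=
  Num.truncn (100 * mstar * ln (n%:R) / (mustar * powR Deltastar gamma)).

(* reach E eps beta K r H : the first r rounds have been executed, each of them
   ended with Status = true, and the current subgraph is H; hence round r+1 is
   executed.  So "round r+1 is executed" iff reach ... r H for some H. *)
Inductive reach (E : {set {set T}}) (eps beta : R) (K : nat) :
    nat -> {set {set T}} -> Prop :=
| reach0 : reach E eps beta K 0 set0
| reachS (r : nat) (H H' : {set {set T}}) : reach E eps beta K r H -> round E eps beta K H H' true ->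
    reach E eps beta K r.+1 H'.

End Defs.

(* For c := beta - 2 consider the potential Phi(H) = 2c|H| - sum_v deg_v(H)^2.
   Adding an underfull edge e raises Phi by 2(c - deg_e(H) - 1) > eps beta - 2 >= 2,
   and removing an overfull edge does not lower it, because eps beta >= 4; so every
   round ending with Status = true raises Phi by at least 2.  On the other hand
   Phi(H) <= 2 beta |H|, and if H has no overfull edge then every edge of H meets a
   maximum matching M of H while each g in M meets at most deg_g(H) <= beta edges,
   so |H| <= beta mu(G).  Hence at most beta^2 mu(G) rounds end with Status = true. *)

From HB Require Import structures.
From mathcomp Require Import all_boot all_order all_algebra.
From mathcomp Require Import reals exp.
From mathcomp Require Import lra zify.
Import Order.TTheory GRing.Theory Num.Theory.
Set Implicit Arguments. Unset Strict Implicit. Unset Printing Implicit Defensive.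
Local Open Scope ring_scope.

Section Degrees.
Variable T : finType.
Implicit Types (H : {set {set T}}) (e : {set T}).

Lemma degv_set0 (v : T) : degv set0 v = 0%N.
Proof. by apply/eqP; rewrite cards_eq0; apply/eqP/setP => f; rewrite !inE. Qed.

Lemma degv_setU1 H e (v : T) :
  e \notin H -> degv (e |: H) v = (degv H v + (v \in e))%N.
Proof.
move=> eH; rewrite /degv; case: (boolP (v \in e)) => ve.
  have -> : [set f in e |: H | v \in f] = e |: [set f in H | v \in f].
    by apply/setP => f; rewrite !inE; case: eqP => [->|//]; rewrite ve.
  by rewrite cardsU1 inE (negbTE eH) addnC.
have -> : [set f in e |: H | v \in f] = [set f in H | v \in f].
  by apply/setP => f; rewrite !inE; case: eqP => [->|//]; rewrite (negbTE ve) !andbF.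
by rewrite addn0.
Qed.

Lemma dege_setU1 H e : e \notin H -> dege (e |: H) e = (dege H e + #|e|)%N.
Proof.
move=> eH; rewrite /dege -sum1_card -big_split /=.
by apply: eq_bigr => v ve; rewrite degv_setU1 // ve.
Qed.

Definition sum_sqdeg H : nat := (\sum_(v : T) degv H v ^ 2)%N.

Lemma sum_sqdeg_set0 : sum_sqdeg set0 = 0%N.
Proof. by rewrite /sum_sqdeg big1 // => v _; rewrite degv_set0. Qed.

Lemma sum_sqdeg_setU1 H e :
  e \notin H -> sum_sqdeg (e |: H) = (sum_sqdeg H + 2 * dege H e + #|e|)%N.
Proof.
move=> eH; rewrite /sum_sqdeg /dege -sum1_card big_distrr /= !(big_mkcond (mem e)).
rewrite -!big_split /=; apply: eq_bigr => v _.
by rewrite degv_setU1 //; case: (v \in e); lia.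
Qed.

End Degrees.

Section Potential.
Variables (T : finType) (R : realType).
Implicit Types (H : {set {set T}}) (e f : {set T}) (c eps beta : R).

Definition potential c H : R := 2 * c * #|H|%:R - (sum_sqdeg H)%:R.

Lemma potential_set0 c : potential c set0 = 0.
Proof. by rewrite /potential cards0 sum_sqdeg_set0 mulr0 subrr. Qed.

Lemma potential_le c H : potential c H <= 2 * c * #|H|%:R.
Proof. by rewrite /potential lerBlDr lerDl. Qed.

Lemma potential_setU1 c H e : e \notin H -> #|e| = 2%N ->
  potential c (e |: H) = potential c H + 2 * (c - (dege H e)%:R - 1).
Proof.
by move=> eH e2; rewrite /potential sum_sqdeg_setU1 // cardsU1 eH e2 !natrD /=; lra.
Qed.

Lemma potential_add_underfull c eps beta H e : e \notin H -> #|e| = 2%N ->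
  (1 - eps) * beta + 2 <= c -> underfull eps beta H e ->
  potential c H + 2 <= potential c (e |: H).
Proof. by move=> eH e2 hc; rewrite /underfull potential_setU1 //; lra. Qed.

Lemma potential_del_overfull c beta H f : f \in H -> #|f| = 2%N ->
  c <= beta - 1 -> overfull beta H f -> potential c H <= potential c (H :\ f).
Proof.
move=> fH f2 hc; have fHf : f \notin H :\ f by rewrite setD11.
rewrite /overfull -{1 2}(setD1K fH) potential_setU1 // dege_setU1 // f2 natrD.
lra.
Qed.

End Potential.

Section Matchings.
Variable T : finType.
Implicit Types (E H M : {set {set T}}) (e f g : {set T}).

Lemma card_le_mu E M : is_matching E M -> (#|M| <= mu E)%N.
Proof. exact: (leq_bigmax_cond (F := fun M => #|M|)). Qed.

Lemma is_matching_subset E H M : H \subset E -> is_matching H M -> is_matching E M.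
Proof. by move=> sHE /andP[sMH dM]; rewrite /is_matching (subset_trans sMH sHE). Qed.

Lemma is_matching1 E e : e \in E -> is_matching E [set e].
Proof.
move=> eE; rewrite /is_matching sub1set eE.
by apply/forall_inP => f /set1P-> /=; apply/forall_inP => g /set1P->; rewrite eqxx.
Qed.

Lemma mu_gt0 E : (0 < #|E|)%N -> (0 < mu E)%N.
Proof.
by case/card_gt0P => e eE; have := card_le_mu (is_matching1 eE); rewrite cards1.
Qed.

Lemma is_matchingU1 H M f : is_matching H M -> f \in H ->
  (forall g, g \in M -> [disjoint f & g]) -> is_matching H (f |: M).
Proof.
move=> /andP[sMH /forall_inP dM] fH dfM.
rewrite /is_matching subUset sub1set fH sMH.
apply/forall_inP => x /setU1P xM; apply/forall_inP => y /setU1P yM; apply/implyP.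
case: xM yM => [->|xM] [->|yM]; first by rewrite eqxx.
- by move=> _; apply: dfM.
- by move=> _; rewrite disjoint_sym; apply: dfM.
- by move/forall_inP/(_ y yM)/implyP: (dM x xM).
Qed.

Lemma simple_graph_subset E H : H \subset E -> simple_graph E -> simple_graph H.
Proof. by move=> /subsetP sHE sE e /sHE/sE. Qed.

Lemma maximum_matching_meets H M f : simple_graph H -> is_matching H M ->
  (forall M', is_matching H M' -> (#|M'| <= #|M|)%N) -> f \in H ->
  exists2 g, g \in M & ~~ [disjoint f & g].
Proof.
move=> sH mM maxM fH.
have [/exists_inP //|] := boolP [exists g in M, ~~ [disjoint f & g]].
rewrite negb_exists_in => /forall_inP dfM; have {}dfM g : g \in M -> [disjoint f & g].
  by move/dfM/negPn.
have fM : f \notin M.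
  apply/negP => /dfM; rewrite -setI_eq0 setIid => /eqP f0.
  by have := sH f fH; rewrite f0 cards0.
by have := maxM _ (is_matchingU1 mM fH dfM); rewrite cardsU1 fM ltnn.
Qed.

Lemma card_le_sum_dege H M :
  (forall f, f \in H -> exists2 g, g \in M & ~~ [disjoint f & g]) ->
  (#|H| <= \sum_(g in M) dege H g)%N.
Proof.
move=> cover; rewrite -sum1_card.
apply: (@leq_trans (\sum_(f in H) \sum_(g in M) \sum_(v in g) (v \in f))).
  apply: leq_sum => f fH; have [g gM] := cover f fH.
  rewrite -setI_eq0 => /set0Pn[v /setIP[vf vg]].
  by rewrite (bigD1 g) //= (bigD1 v) //= vf -addnA leq_addr.
rewrite exchange_big; apply: leq_sum => g _.
rewrite exchange_big; apply: leq_sum => v _.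
rewrite /degv -sum1_card big_mkcond [leqRHS]big_mkcond; apply: leq_sum => f _.
by rewrite inE; case: (f \in H).
Qed.

End Matchings.

Section NoOverfull.
Variables (T : finType) (R : realType).
Implicit Types (E H : {set {set T}}) (beta : R).

Definition no_overfull beta H : Prop := forall f, f \in H -> ~ overfull beta H f.

Lemma card_no_overfull_le E H beta : simple_graph E -> 0 <= beta ->
  H \subset E -> no_overfull beta H -> #|H|%:R <= beta * (mu E)%:R.
Proof.
move=> sE beta0 sHE noH.
have m0 : is_matching H set0.
  by rewrite /is_matching sub0set; apply/forall_inP => e; rewrite inE.
have [M mM maxM] := arg_maxnP (fun M : {set {set T}} => #|M|) m0.
have meets := maximum_matching_meets (simple_graph_subset sHE sE) mM maxM.
have degM : \sum_(g in M) (dege H g)%:R <= \sum_(g in M) beta.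
  apply: ler_sum => g gM; rewrite leNgt; apply/negP/noH.
  by case/andP: mM => /subsetP/(_ g gM).
apply: le_trans (_ : _ <= (\sum_(g in M) dege H g)%:R) _.
  by rewrite ler_nat; apply: card_le_sum_dege.
rewrite natr_sum (le_trans degM) // sumr_const -[beta *+ _]mulr_natr.
rewrite ler_wpM2l // ler_nat.
exact/card_le_mu/(is_matching_subset sHE).
Qed.

End NoOverfull.

Section Rounds.
Variables (T : finType) (R : realType) (E : {set {set T}}) (eps beta c : R).
Hypotheses (sE : simple_graph E)
  (c_le : c <= beta - 1) (c_ge : (1 - eps) * beta + 2 <= c).
Implicit Types (H : {set {set T}}).

Lemma cleanup_subset H H' : cleanup beta H H' -> H' \subset H.
Proof.
elim=> // H0 H1 H2 [f _ [_ ->]] _ /subset_trans; apply; exact: subD1set.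
Qed.

Lemma cleanup_no_overfull H H' : cleanup beta H H' -> no_overfull beta H'.
Proof. by elim. Qed.

Lemma cleanup_potential H H' : simple_graph H -> cleanup beta H H' ->
  potential c H <= potential c H'.
Proof.
move=> + cl; elim: cl => // H0 H1 H2 [f fH0 [ovf ->]] _ IH sH0.
apply: le_trans (potential_del_overfull fH0 (sH0 f fH0) c_le ovf) (IH _).
exact: simple_graph_subset (subD1set H0 f) sH0.
Qed.

Lemma round_subset k H H' b : round E eps beta k H H' b -> H \subset E -> H' \subset E.
Proof.
elim=> // {}k H0 H1 H2 e b1 b2 eE [[_ [_ [_ cl]]] | [_ [_ ->]]] _ IH sH0; apply: IH => //.
by apply: subset_trans (cleanup_subset cl) _; rewrite subUset sub1set eE.
Qed.

Lemma round_no_overfull k H H' b : round E eps beta k H H' b ->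
  no_overfull beta H -> no_overfull beta H'.
Proof.
elim=> // {}k H0 H1 H2 e b1 b2 _ [[_ [_ [_ cl]]] | [_ [_ ->]]] _ IH noH0; apply: IH => //.
exact: cleanup_no_overfull cl.
Qed.

Lemma round_potential k H H' b : round E eps beta k H H' b -> H \subset E ->
  potential c H + 2 *+ b <= potential c H'.
Proof.
elim=> [H0 _|{}k H0 H1 H2 e b1 b2 eE step rd IH sH0]; first by rewrite addr0.
case: step => [[/setDP[_ eH0] [uf [-> cl]]] | [_ [-> eqH]]]; last by subst H1; exact: IH.
have sU : e |: H0 \subset E by rewrite subUset sub1set eE.
have add_e := potential_add_underfull eH0 (sE eE) c_ge uf.
have clean_e := cleanup_potential (simple_graph_subset sU sE) cl.
have rest := IH (subset_trans (cleanup_subset cl) sU).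
have b2_ge0 : 0 <= 2 *+ b2 :> R by rewrite mulrn_wge0.
rewrite /= mulr1n; lra.
Qed.

Lemma reach_subset K r H : reach E eps beta K r H -> H \subset E.
Proof.
by elim=> [|{}r H0 H1 _ sH0 rd]; [exact: sub0set | exact: round_subset rd sH0].
Qed.

Lemma reach_no_overfull K r H : reach E eps beta K r H -> no_overfull beta H.
Proof.
elim=> [f|{}r H0 H1 _ noH0 rd]; first by rewrite inE.
exact: round_no_overfull rd noH0.
Qed.

Lemma reach_potential K r H : reach E eps beta K r H -> 2 *+ r <= potential c H.
Proof.
elim=> [|{}r H0 H1 reach0 IH rd]; first by rewrite potential_set0.
by rewrite mulrSr (le_trans _ (round_potential rd (reach_subset reach0))) // lerD2r.
Qed.

End Rounds.

Lemma le_mul_of_div_cube (R : realFieldType) (a eps beta : R) :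
  0 <= a -> 0 < eps <= 1 -> a / eps ^+ 3 <= beta -> a <= eps * beta <= beta.
Proof.
move=> a0 /andP[eps0 eps1]; rewrite ler_pdivrMr ?exprn_gt0 // => hb.
have e3 : eps ^+ 3 <= eps by rewrite exprS ler_piMr ?(ltW eps0) // exprn_ile1 // ltW.
have e30 : 0 < eps ^+ 3 by rewrite exprn_gt0.
nra.
Qed.

Theorem lemma3p1 (R : realType) :
  exists c0 C : R, 0 < c0 /\ 0 < C /\
  forall (T : finType) (E : {set {set T}}) (eps beta mustar Deltastar mstar gamma : R),
    simple_graph E -> (0 < #|E|)%N ->
    0 < eps < 1 -> c0 / eps ^+ 3 <= beta ->
    (mu E)%:R / (2 + eps) <= mustar <= #|T|%:R ->
    (2 * #|E|%:R) / #|T|%:R <= Deltastar <= #|T|%:R ->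
    #|E|%:R <= mstar ->
    0 < gamma < 1 ->
    forall (r : nat) (H : {set {set T}}),
      reach E eps beta (iters #|T| mstar mustar Deltastar gamma) r H ->
      (r.+1)%:R <= C * beta ^+ 2 * (mu E)%:R.
Proof.
exists 4, 2; do 2!split => //.
move=> T E eps beta mus Ds ms gam sE E0 /andP[eps0 eps1] hbeta _ _ _ _ r H reachH.
have /andP[eps_beta beta_ge] : 4 <= eps * beta <= beta.
  by apply: le_mul_of_div_cube hbeta; rewrite ?eps0 ?ltW.
have mu_ge1 : 1 <= (mu E)%:R :> R by rewrite ler1n mu_gt0.
have c_le : beta - 2 <= beta - 1 by lra.
have c_ge : (1 - eps) * beta + 2 <= beta - 2 by rewrite mulrBl mul1r; lra.
have pot := reach_potential sE c_le c_ge reachH.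
have card_H : #|H|%:R <= beta * (mu E)%:R.
  by apply: card_no_overfull_le sE _ (reach_subset reachH) (reach_no_overfull reachH);
     lra.
have := le_trans pot (potential_le _ _); rewrite -mulr_natr -natr1 expr2 => bound.
have h0 : 0 <= #|H|%:R :> R := ler0n _ _.
nra.
Qed.
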